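(* Let $P$ be an $n\times n$ sign pattern and $A\in\mathcal{Q}(P)$. If $A$ has the nSSP, then for every superpattern $P'$ of $P$ there exists $A'\in\mathcal{Q}(P')$ such that $A'$ is similar to $A$ and $A'$ has the nSSP.
   Context: A sign pattern is an array with entries in $\{+,-,0\}$; its qualitative class $\mathcal{Q}(P)$ is the set of real matrices of the same size whose entries have the signs prescribed by $P$. $P'$ is a superpattern of $P$ if $P'$ is obtained from $P$ by replacing some (possibly none) of its $0$ entries by $+$ or $-$. $\circ$ is the entrywise product. A real $n\times n$ matrix $A$ has the non-symmetric strong spectral property (nSSP) if $X=O$ is the only real $n\times n$ matrix with $A\circ X=O$ and $AX^\top-X^\top A=O$. *)

From HB Require Import structures.
From mathcomp Require Import all_boot all_order all_algebra.
From mathcomp Require Import reals.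
Set Implicit Arguments. Unset Strict Implicit. Unset Printing Implicit Defensive.
Import Order.TTheory GRing.Theory Num.Theory.
Local Open Scope ring_scope.

Inductive sign := Pos | Neg | Zero.

Definition sign_of {R : realType} (x : R) : sign :=
  if 0 < x then Pos else if x < 0 then Neg else Zero.

Definition in_qual_class {R : realType} {n : nat}
  (P : 'M[sign]_n) (A : 'M[R]_n) : Prop :=
  forall i j, sign_of (A i j) = P i j.

Definition superpattern {n : nat} (P P' : 'M[sign]_n) : Prop :=
  forall i j, P i j <> Zero -> P' i j = P i j.

Definition hadamard {R : realType} {n : nat} (A X : 'M[R]_n) : 'M[R]_n :=
  \matrix_(i, j) (A i j * X i j).

Definition nSSP {R : realType} {n : nat} (A : 'M[R]_n) : Prop :=
  forall X : 'M[R]_n,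
    hadamard A X = 0 -> A *m X^T - X^T *m A = 0 -> X = 0.

Definition similar_real {R : realType} {n : nat} (A B : 'M[R]_n) : Prop :=
  exists S : 'M[R]_n, S \in unitmx /\ B = S *m A *m invmx S.

(* The nSSP of [A] says that the tangent space [K A - A K] of the similarity
   orbit of [A] and the matrices supported in the support of [A] are
   transversal: every matrix splits boundedly and linearly as [K A - A K + F].
   Put the prescribed new signs, scaled by a small [e], on the zero entries of
   [A] (matrix [e T]) and look for [F] supported on the support of [A] and [K]
   with [(A + e T + F)(1 + K) = (1 + K) A]; this is a quadratic equation in
   the splitting data, solved by the contraction principle, with
   [F, K = O(e)].  So [A + e T + F] is similar to [A] and, for small [e], has
   sign pattern [P'].  Finally the nSSP is open among matrices whose support
   contains that of [A], which is seen by pairing a witness [X] with its own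
   splitting. *)

From HB Require Import structures.
From mathcomp Require Import all_boot all_order all_algebra.
From mathcomp Require Import boolp classical_sets functions reals.
From mathcomp Require Import topology normedtype sequences.
From mathcomp Require Import ring lra.
Import Order.TTheory GRing.Theory Num.Theory.
Local Open Scope classical_set_scope.
Local Open Scope ring_scope.

Lemma closed_ball_contraction_fixpoint (R : realType) (V : completeNormedModType R)
    (f : V -> V) (r q : R) :
  0 < r -> 0 <= q -> q < 1 ->
  (forall x, `|x| <= r -> `|f x| <= r) ->
  (forall x y, `|x| <= r -> `|y| <= r -> `|f x - f y| <= q * `|x - y|) ->
  exists2 x, `|x| <= r & x = f x.
Proof.
move=> r0 q0 q1 fU flip.
pose U := closed_ball (0 : V) r.
have UE x : U x <-> `|x| <= r.
  by rewrite /U closed_ballE //= /closed_ball_ /= sub0r normrN.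
have fUU : {homo f : x / U x >-> U x} by move=> x /UE /fU /UE.
have ctr : is_contraction (mkfun_fun fUU).
  exists (@interval_inference.NngNum _ q q0); split => //= -[x y] /= [/UE Ux /UE Uy].
  exact: flip.
have U0 : U !=set0 by exists 0; apply/UE; rewrite normr0 ltW.
have [p /UE Up fp] := banach_fixed_point ctr (@closed_ball_closed _ _ _ _) U0.
by exists p.
Qed.

(* ['M[R]_n] is not canonically a [completeNormedModType]; [MX R n] is. *)
Definition MX (R : realType) n := 'M[R]_n.
HB.instance Definition _ (R : realType) n := NormedModule.copy (MX R n) 'M[R]_n.
HB.instance Definition _ (R : realType) n := Complete.copy (MX R n) 'M[R]_n.

Section MatrixNorm.
Context {R : realType}.

Lemma mx_entry_norm_le {m p} (X : 'M[R]_(m, p)) i j : `|X i j| <= `|X|.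
Proof.
rewrite [leRHS]/Num.Def.normr /= mx_normrE; apply/bigmax_geP; right => /=.
by exists (i, j).
Qed.

Lemma mx_norm_le {m p} (X : 'M[R]_(m, p)) c : 0 <= c ->
  (forall i j, `|X i j| <= c) -> `|X| <= c.
Proof.
move=> c0 H; rewrite [leLHS]/Num.Def.normr /= mx_normrE.
by apply: bigmax_le => // -[i j] _; apply: H.
Qed.

Lemma mulmx_norm_le {m p q} (X : 'M[R]_(m, p)) (Y : 'M[R]_(p, q)) :
  `|X *m Y| <= p%:R * `|X| * `|Y|.
Proof.
apply: mx_norm_le => [|i j]; first by rewrite !mulr_ge0.
rewrite mxE (le_trans (ler_norm_sum _ _ _)) //.
apply: (le_trans (y := \sum_(l < p) (`|X| * `|Y|))).
  by apply: ler_sum => l _; rewrite normrM ler_pM ?mx_entry_norm_le.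
by rewrite sumr_const card_ord -mulrA mulr_natl.
Qed.

Lemma trmx_norm {m p} (X : 'M[R]_(m, p)) : `|X^T| = `|X|.
Proof.
have le_tr m' p' (Y : 'M[R]_(m', p')) : `|Y^T| <= `|Y|.
  by apply: mx_norm_le => // i j; rewrite mxE mx_entry_norm_le.
by apply/eqP; rewrite eq_le le_tr -{1}[X]trmxK le_tr.
Qed.

Lemma mxvec_norm {m p} (X : 'M[R]_(m, p)) : `|mxvec X| <= `|X|.
Proof.
apply: mx_norm_le => // i k; rewrite [i]ord1.
by case/mxvec_indexP: k => a b; rewrite mxvecE mx_entry_norm_le.
Qed.

Lemma vec_mx_norm {m p} (v : 'rV[R]_(m * p)) : `|vec_mx v| <= `|v|.
Proof. by apply: mx_norm_le => // i j; rewrite mxE mx_entry_norm_le. Qed.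

Lemma nonzero_entries_ge {m p} (A : 'M[R]_(m, p)) :
  exists2 a, 0 < a & forall i j, A i j != 0 -> a <= `|A i j|.
Proof.
exists (\big[Order.min/1]_(ij | A ij.1 ij.2 != 0) `|A ij.1 ij.2|).
  by apply: lt_bigmin => // -[i j] /=; rewrite normr_gt0.
by move=> i j Aij; apply: (@bigmin_le_cond _ _ _ _ (i, j) (fun ij => A ij.1 ij.2 != 0)).
Qed.

End MatrixNorm.

Section SquareMatrix.
Context {R : realType} {n : nat}.
Implicit Types K V : 'M[R]_n.

Lemma unitmx_1D K : n%:R * `|K| < 1 -> 1%:M + K \in unitmx.
Proof.
move=> smallK; rewrite -row_free_unit -kermx_eq0; apply/eqP.
set X := kermx _; have XK : X = - (X *m K).
  by apply/eqP; rewrite -addr_eq0 -{1}[X]mulmx1 -mulmxDr mulmx_ker.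
have : `|X| <= n%:R * `|K| * `|X|.
  by rewrite {1}XK normrN (le_trans (mulmx_norm_le _ _)) // mulrAC.
have := normr_ge0 X; have := normr_ge0 K => ? ? ?.
by apply/normr0_eq0; nra.
Qed.

Lemma quadratic_fixpoint (K F : 'M[R]_n -> 'M[R]_n) (c e : R) V :
  {morph K : X Y / X - Y} -> {morph F : X Y / X - Y} ->
  (forall X, `|K X| <= c * `|X| /\ `|F X| <= c * `|X|) ->
  0 <= c -> 0 < e -> 2 * n%:R * c * (1 + 4 * c) * e <= 1 -> `|V| <= e ->
  exists2 M, `|M| <= 2 * e & M = V + (V - F M) *m K M.
Proof.
move=> KB FB KFN c0 e0 small Ve.
have n0 : 0 <= n%:R :> R by [].
have prod_le X Z : `|X| <= 2 * e -> `|(V - F X) *m K Z| <= n%:R * (e + c * (2 * e)) * (c * `|Z|).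
  move=> Xe; rewrite (le_trans (mulmx_norm_le _ _)) // -!mulrA ler_wpM2l //.
  have [[_ FX] [KZ _]] := (KFN X, KFN Z); apply: ler_pM => //.
  rewrite (le_trans (ler_normB _ _)) // lerD // (le_trans FX) // ler_wpM2l //.
apply: (@closed_ball_contraction_fixpoint R (MX R n) _ _ (n%:R * c * (1 + 4 * c) * e)).
- by rewrite mulr_gt0.
- by rewrite !mulr_ge0 // ?addr_ge0 ?mulr_ge0 // ltW.
- lra.
- move=> X Xe; rewrite (le_trans (ler_normD _ _)) //.
  rewrite (le_trans (lerD Ve (prod_le X X Xe))) //.
  have coef0 : 0 <= n%:R * (e + c * (2 * e)) by apply: mulr_ge0 => //; nra.
  have := ler_wpM2l coef0 (ler_wpM2l c0 Xe).
  have : 0 <= n%:R * c * c * e * e by rewrite !mulr_ge0 // ltW.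
  nra.
move=> X Y Xe Ye.
have -> : V + (V - F X) *m K X - (V + (V - F Y) *m K Y) =
          (V - F X) *m K (X - Y) + (F Y - F X) *m K Y.
  rewrite KB mulmxBr !mulmxBl.
  set a := V *m K X; set b := F X *m K X; set a' := V *m K Y.
  set b' := F X *m K Y; set d := F Y *m K Y.
  by apply/matrixP => i j; rewrite !mxE; ring.
have FK : `|(F Y - F X) *m K Y| <= n%:R * (c * `|X - Y|) * (c * (2 * e)).
  have [[_ FYX] [KY _]] := (KFN (Y - X), KFN Y).
  rewrite -FB (le_trans (mulmx_norm_le _ _)) //.
  apply: ler_pM; rewrite ?mulr_ge0 //; first by rewrite ler_wpM2l // distrC.
  by rewrite (le_trans KY) // ler_wpM2l.
rewrite (le_trans (ler_normD _ _)) // (le_trans (lerD (prod_le X (X - Y) Xe) FK)) //.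
lra.
Qed.

End SquareMatrix.

Section Gram.
Context {R : realType} {n : nat}.
Implicit Types A B X Y K : 'M[R]_n.

Definition fdot Y X := \tr (Y^T *m X).

Lemma fdotE Y X : fdot Y X = \sum_i \sum_k Y k i * X k i.
Proof.
by apply: eq_bigr => i _; rewrite mxE; apply: eq_bigr => k _; rewrite mxE.
Qed.

Lemma fdotDr Y X1 X2 : fdot Y (X1 + X2) = fdot Y X1 + fdot Y X2.
Proof. by rewrite /fdot mulmxDr mxtraceD. Qed.

Lemma fdot_disjoint Y X : (forall i j, Y i j = 0 \/ X i j = 0) -> fdot Y X = 0.
Proof.
move=> YX; rewrite fdotE big1 // => i _; rewrite big1 // => k _.
by case: (YX k i) => ->; rewrite ?mul0r ?mulr0.
Qed.

Lemma fdot_self_ge0 X : 0 <= fdot X X.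
Proof.
rewrite fdotE; apply: sumr_ge0 => i _; apply: sumr_ge0 => k _.
by rewrite -expr2 sqr_ge0.
Qed.

Lemma fdot_self_eq0 X : fdot X X = 0 -> X = 0.
Proof.
have sq_ge0 i k : 0 <= X k i * X k i by rewrite -expr2 sqr_ge0.
rewrite fdotE => /eqP; rewrite psumr_eq0 => [/allP X0|i _]; last exact: sumr_ge0.
apply/matrixP => k i; move/implyP: (X0 i (mem_index_enum _)) => /(_ isT).
rewrite psumr_eq0 // => /allP /(_ k (mem_index_enum _)) /implyP /(_ isT).
by rewrite !mxE mulf_eq0 orbb => /eqP.
Qed.

Lemma sqr_norm_le_fdot X : `|X| ^+ 2 <= fdot X X.
Proof.
have [X0|/mx_norm_neq0 [[a b] /= Xab]] := eqVneq (mx_norm X) 0.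
  by rewrite [`|X|]/Num.Def.normr /= X0 expr0n fdot_self_ge0.
rewrite [`|X|]/Num.Def.normr /= Xab real_normK ?num_real // fdotE.
have sq_ge0 i k : 0 <= X k i * X k i by rewrite -expr2 sqr_ge0.
rewrite (bigD1 b) //= (bigD1 a) //= expr2 -addrA lerDl.
by rewrite addr_ge0 ?sumr_ge0 // => i _; rewrite sumr_ge0.
Qed.

Lemma mxtrace_norm_le X : `|\tr X| <= n%:R * `|X|.
Proof.
rewrite (le_trans (ler_norm_sum _ _ _)) //.
apply: (le_trans (y := \sum_(i < n) `|X|)).
  by apply: ler_sum => i _; apply: mx_entry_norm_le.
by rewrite sumr_const card_ord mulr_natl.
Qed.

Definition tcomm A X := A *m X^T - X^T *m A.

Lemma tcomm_is_linear A : linear (tcomm A).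
Proof.
move=> a X Y; rewrite /tcomm linearD linearZ /= mulmxDr mulmxDl.
by rewrite -scalemxAl -scalemxAr scalerBr addrACA opprD.
Qed.

HB.instance Definition _ A :=
  GRing.isLinear.Build R 'M[R]_n 'M[R]_n *:%R (tcomm A) (tcomm_is_linear A).

Lemma tcommBl A B X : tcomm A X - tcomm B X = tcomm (A - B) X.
Proof. by rewrite /tcomm mulmxBl mulmxBr !opprD !opprK addrACA. Qed.

Lemma tcomm_norm_le A X : `|tcomm A X| <= 2 * n%:R * `|A| * `|X|.
Proof.
rewrite (le_trans (ler_normB _ _)) //.
have := mulmx_norm_le A X^T; have := mulmx_norm_le X^T A; rewrite trmx_norm.
have := normr_ge0 A; have := normr_ge0 X; have : 0 <= n%:R :> R by [].
nra.
Qed.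

Lemma fdot_commutator A X K : fdot X (K *m A - A *m K) = \tr (tcomm A X *m K).
Proof.
rewrite /fdot /tcomm mulmxBr mulmxBl !raddfB /= !mulmxA; congr (_ - _).
by rewrite mxtrace_mulC mulmxA.
Qed.

Definition mask A Y := \matrix_(i, j) (if A i j == 0 then 0 else Y i j).

Lemma mask_is_linear A : linear (mask A).
Proof.
move=> a X Y; apply/matrixP => i j; rewrite !mxE.
by case: (A i j == 0); rewrite ?mulr0 ?addr0.
Qed.

HB.instance Definition _ A :=
  GRing.isLinear.Build R 'M[R]_n 'M[R]_n *:%R (mask A) (mask_is_linear A).

Lemma mask_eq0 A Y : (mask A Y == 0) = (hadamard A Y == 0).
Proof.
apply/eqP/eqP => /matrixP Y0; apply/matrixP => i j; move: (Y0 i j); rewrite !mxE.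
  by case: eqP => [->|_ ->]; rewrite ?mul0r ?mulr0.
by case: eqP => // /eqP A0 /eqP; rewrite mulf_eq0 (negbTE A0) => /eqP.
Qed.

Lemma mask_norm_le A Y : `|mask A Y| <= `|Y|.
Proof.
apply: mx_norm_le => // i j; rewrite mxE.
by case: (A i j == 0); rewrite ?normr0 ?mx_entry_norm_le.
Qed.

Lemma fdot_mask A Y : fdot Y (mask A Y) = fdot (mask A Y) (mask A Y).
Proof.
rewrite !fdotE; apply: eq_bigr => i _; apply: eq_bigr => k _; rewrite !mxE.
by case: (A k i == 0); rewrite ?mulr0.
Qed.

(* [gram A] is [Psi^* Psi] for [Psi Y := (mask A Y, tcomm A Y)], whose
   injectivity is exactly the nSSP. *)
Definition gram A Y := (tcomm A Y)^T *m A - A *m (tcomm A Y)^T + mask A Y.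

Lemma gram_is_linear A : linear (gram A).
Proof.
move=> a X Y; rewrite /gram !linearP /= mulmxDl -scalemxAl !scalerDr scalerN.
by rewrite [X in X + _ = _]addrACA [LHS]addrACA.
Qed.

HB.instance Definition _ A :=
  GRing.isLinear.Build R 'M[R]_n 'M[R]_n *:%R (gram A) (gram_is_linear A).

Lemma fdot_gram A Y :
  fdot Y (gram A Y) = fdot (tcomm A Y)^T (tcomm A Y)^T + fdot (mask A Y) (mask A Y).
Proof. by rewrite fdotDr fdot_commutator fdot_mask /fdot trmxK. Qed.

Lemma gram_eq0 {A} : nSSP A -> forall Y, gram A Y = 0 -> Y = 0.
Proof.
move=> sspA Y gram0; have := fdot_gram A Y; rewrite gram0 /fdot mulmx0 raddf0.
move/esym/eqP; rewrite -!/(fdot _ _) paddr_eq0 ?fdot_self_ge0 //.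
case/andP=> /eqP/fdot_self_eq0/(congr1 trmx) + /eqP/fdot_self_eq0/eqP.
rewrite trmxK trmx0 mask_eq0 => comm0 /eqP had0.
exact: sspA.
Qed.

Lemma gram_unitmx {A} : nSSP A -> lin_mx (gram A) \in unitmx.
Proof.
move=> sspA; rewrite -row_free_unit -kermx_eq0; apply/eqP/row_matrixP => i.
have : row i (kermx (lin_mx (gram A))) *m lin_mx (gram A) = 0.
  by rewrite -row_mul mulmx_ker row0.
rewrite mul_rV_lin row0 => /(congr1 vec_mx); rewrite mxvecK linear0.
by move=> /(gram_eq0 sspA) /(congr1 mxvec); rewrite vec_mxK linear0.
Qed.

Definition gram_inv A X := vec_mx (mxvec X *m invmx (lin_mx (gram A))).

Lemma gram_inv_is_linear A : linear (gram_inv A).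
Proof. by move=> a X Y; rewrite /gram_inv linearP mulmxDl -scalemxAl linearP. Qed.

HB.instance Definition _ A :=
  GRing.isLinear.Build R 'M[R]_n 'M[R]_n *:%R (gram_inv A) (gram_inv_is_linear A).

Lemma gram_invK {A} : nSSP A -> cancel (gram_inv A) (gram A).
Proof.
by move=> sspA X; rewrite /gram_inv -mx_rV_lin mulmxKV ?gram_unitmx ?mxvecK.
Qed.

Lemma gram_inv_norm_le A : exists2 c, 0 < c & forall X, `|gram_inv A X| <= c * `|X|.
Proof.
exists ((n * n)%:R * `|invmx (lin_mx (gram A))| + 1) => [|X].
  by rewrite ltr_wpDl ?mulr_ge0.
rewrite (le_trans (vec_mx_norm _)) // (le_trans (mulmx_norm_le _ _)) //.
rewrite mulrAC mulrDl mul1r ler_wpDr //.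
by rewrite ler_wpM2l ?mulr_ge0 ?mxvec_norm.
Qed.

Lemma nSSP_decomposition {A} : nSSP A ->
  exists K F : 'M[R]_n -> 'M[R]_n, exists2 c : R, 0 < c &
  [/\ forall X, K X *m A - A *m K X + F X = X,
      forall X i j, A i j = 0 -> F X i j = 0,
      {morph K : X Y / X - Y}, {morph F : X Y / X - Y}
    & forall X, `|K X| <= c * `|X| /\ `|F X| <= c * `|X|].
Proof.
move=> sspA; have [c c0 invN] := gram_inv_norm_le A.
exists (fun X => (tcomm A (gram_inv A X))^T), (fun X => mask A (gram_inv A X)).
exists ((2 * n%:R * `|A| + 1) * c); first by rewrite mulr_gt0 // ltr_wpDl ?mulr_ge0.
split=> [X|X i j A0|X Y|X Y|X] /=.
- exact: gram_invK.
- by rewrite mxE A0 eqxx.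
- by rewrite -!raddfB.
- by rewrite -!raddfB.
have gX := invN X; have := normr_ge0 X; have := normr_ge0 (gram_inv A X).
have := tcomm_norm_le A (gram_inv A X); have := mask_norm_le A (gram_inv A X).
have : 0 <= 2 * n%:R * `|A| by rewrite !mulr_ge0.
rewrite trmx_norm; split; nra.
Qed.

End Gram.

Section Perturbation.
Context {R : realType} {n : nat}.
Implicit Types A B X : 'M[R]_n.

Lemma nSSP_similar_perturbation {A} : nSSP A ->
  exists2 c : R, 0 < c & forall (T : 'M[R]_n) (e : R), `|T| <= 1 -> 0 < e -> c * e <= 1 ->
  exists F : 'M[R]_n, [/\ forall i j, A i j = 0 -> F i j = 0, `|F| <= c * e
              & similar_real A (A + e *: T + F)].
Proof.
move=> sspA; have [K [F [c c0 [decomp Fsupp KB FB KFN]]]] := nSSP_decomposition sspA.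
have n0 : 0 <= n%:R :> R by [].
have nc0 : 0 <= n%:R * c by rewrite mulr_ge0 // ltW.
exists (2 * c * (1 + n%:R * (1 + 4 * c))); first by nra.
move=> T e T1 e0 small.
have ce0 : 0 < c * e by rewrite mulr_gt0.
have nce0 : 0 <= n%:R * c * c * e by rewrite !mulr_ge0 // ltW.
have eT : `|e *: T| <= e by rewrite normrZ gtr0_norm // ler_piMr // ltW.
have small_fix : 2 * n%:R * c * (1 + 4 * c) * e <= 1 by nra.
have [M Me fixM] := @quadratic_fixpoint R n K F c e _ KB FB KFN (ltW c0) e0 small_fix eT.
have [KM FM] := KFN M.
exists (- F M); split.
- by move=> i j /(Fsupp M) Aij; rewrite mxE Aij oppr0.
- rewrite normrN (le_trans FM) //; nra.
(* With [S := 1 + K M], the fixed-point equation for [M] together with the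
   splitting [M = K M A - A K M + F M] is exactly [(A + e T - F M) S = S A]. *)
pose S := 1%:M + K M.
have unitS : S \in unitmx.
  apply: unitmx_1D; have := ler_wpM2l n0 KM; nra.
have similarS : (A + (e *: T - F M)) *m S = S *m A.
  have eDK : (e *: T - F M) *m K M = M - e *: T by rewrite [in RHS]fixM addrAC subrr add0r.
  have eKA : K M *m A = M - F M + A *m K M.
    move: (decomp M); set a := K M *m A; set b := A *m K M; set f := F M => <-.
    by rewrite addrK subrK.
  rewrite /S mulmxDl !mulmxDr !mulmx1 mulmxDl mul1mx eDK eKA.
  set a := A *m K M; set t := e *: T; set f := F M.
  by apply/matrixP => i j; rewrite !mxE; ring.
by exists S; split => //; rewrite -addrA -similarS mulmxK.
Qed.

Lemma nSSP_open {A} : nSSP A ->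
  exists2 d : R, 0 < d & forall B, `|B - A| < d ->
    (forall i j, A i j != 0 -> B i j != 0) -> nSSP B.
Proof.
move=> sspA; have [K [F [c c0 [decomp Fsupp _ _ KFN]]]] := nSSP_decomposition sspA.
pose k : R := n%:R; have k0 : 0 <= k by [].
have k3c0 : 0 <= 2 * k ^+ 3 * c by rewrite !mulr_ge0 ?exprn_ge0 // ltW.
exists (2 * k ^+ 3 * c + 1)^-1 => [|B BA suppB X hadX commX].
  by rewrite invr_gt0 ltr_wpDl.
(* Pair [X] with its splitting [K X A - A K X + F X]: [F X] contributes
   nothing (disjoint supports) and, since [tcomm B X = 0], the commutator
   term only sees [B - A]. *)
have XA i j : X i j = 0 \/ F X i j = 0.
  have [/(Fsupp X)|/suppB Bij] := eqVneq (A i j) 0; first by right.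
  left; move/matrixP: hadX => /(_ i j); rewrite !mxE => /eqP.
  by rewrite mulf_eq0 (negbTE Bij) => /eqP.
have tcommA : tcomm A X = - tcomm (B - A) X by rewrite -tcommBl [tcomm B X]commX sub0r opprK.
have fdotX : fdot X X = - \tr (tcomm (B - A) X *m K X).
  by rewrite -{2}[X]decomp fdotDr (fdot_disjoint _ _ XA) addr0 fdot_commutator tcommA mulNmx raddfN.
have trN : `|\tr (tcomm (B - A) X *m K X)| <= 2 * k ^+ 3 * c * `|B - A| * `|X| ^+ 2.
  have [KX _] := KFN X; have tcN := tcomm_norm_le (B - A) X.
  rewrite (le_trans (mxtrace_norm_le _)) // -/k.
  have -> : 2 * k ^+ 3 * c * `|B - A| * `|X| ^+ 2 =
            k * (k * (2 * k * `|B - A| * `|X|) * (c * `|X|)) by ring.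
  rewrite ler_wpM2l // (le_trans (mulmx_norm_le _ _)) //.
  by rewrite ler_pM ?mulr_ge0 // ler_wpM2l.
have smallBA : 2 * k ^+ 3 * c * `|B - A| < 1.
  move: BA; rewrite -[X in _ < X]div1r ltr_pdivlMr ?ltr_wpDl //.
  have := normr_ge0 (B - A); nra.
have := sqr_norm_le_fdot X; rewrite fdotX => /le_trans /(_ (ler_norm _)).
rewrite normrN => /le_trans /(_ trN) sqrXN.
apply/normr0_eq0/eqP; rewrite -sqrf_eq0 eq_le sqr_ge0 andbT.
have := sqr_ge0 `|X|; have := normr_ge0 (B - A); nra.
Qed.

End Perturbation.

Section Signs.
Context {R : realType} {n : nat}.
Implicit Types (P : 'M[sign]_n) (A B F : 'M[R]_n).

Definition sign_val (s : sign) : R :=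
  match s with Pos => 1 | Neg => -1 | Zero => 0 end.

Lemma sign_of_scale (e : R) s : 0 < e -> sign_of (e * sign_val s) = s.
Proof.
move=> e0; rewrite /sign_of; case: s => /=.
- by rewrite mulr1 e0.
- by rewrite mulrN1 oppr_gt0 ltNge (ltW e0) /= oppr_lt0 e0.
- by rewrite mulr0 ltxx.
Qed.

Lemma sign_of_eq0 (x : R) : sign_of x = Zero -> x = 0.
Proof. by rewrite /sign_of; case: ltgtP. Qed.

Lemma sign_ofDr (x f : R) : `|f| < `|x| -> sign_of (x + f) = sign_of x.
Proof.
move=> fx; rewrite /sign_of; have [x0|x0|x0] := ltgtP 0 x.
- have -> // : 0 < x + f.
  by move: fx; rewrite (gtr0_norm x0) ltr_norml => /andP[? ?]; lra.
- have xf0 : x + f < 0.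
    by move: fx; rewrite (ltr0_norm x0) ltr_norml => /andP[? ?]; lra.
  by rewrite ltNge (ltW xf0) /= xf0.
- by move: fx; rewrite -x0 normr0 ltNge normr_ge0.
Qed.

Lemma qual_class_nonzero {P A i j} : in_qual_class P A -> A i j != 0 -> P i j <> Zero.
Proof. by move=> qualA Aij; rewrite -qualA => /sign_of_eq0 /eqP; rewrite (negbTE Aij). Qed.

Lemma superpattern_support {P P' A B i j} :
  in_qual_class P A -> in_qual_class P' B -> superpattern P P' ->
  A i j != 0 -> B i j != 0.
Proof.
move=> qualA qualB superP /(qual_class_nonzero qualA) PZ; apply/eqP => B0.
by apply: (PZ); rewrite -(superP _ _ PZ) -qualB B0 /sign_of ltxx.
Qed.

Definition sign_fill A P' : 'M[R]_n :=
  \matrix_(i, j) if A i j == 0 then sign_val (P' i j) else 0.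

Lemma sign_fill_norm A P' : `|sign_fill A P'| <= 1.
Proof.
apply: mx_norm_le => // i j; rewrite mxE; case: eqP => _; last by rewrite normr0.
by case: (P' i j); rewrite /= ?normrN ?normr1 ?normr0.
Qed.

Lemma qual_class_perturbation {P P' A F} {e : R} :
  in_qual_class P A -> superpattern P P' -> 0 < e ->
  (forall i j, A i j = 0 -> F i j = 0) ->
  (forall i j, A i j != 0 -> `|F i j| < `|A i j|) ->
  in_qual_class P' (A + e *: sign_fill A P' + F).
Proof.
move=> qualA superP e0 Fsupp FA i j; have [Aij|Aij] := eqVneq (A i j) 0.
  by rewrite !mxE Aij eqxx Fsupp // add0r addr0 sign_of_scale.
rewrite !mxE (negbTE Aij) mulr0 addr0 sign_ofDr ?FA // qualA superP //.
exact: qual_class_nonzero qualA Aij.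
Qed.

End Signs.

Lemma exists_small_pos {R : realType} (c b : R) :
  0 <= c -> 0 < b -> exists2 e, 0 < e & (c + 1) * e < b.
Proof.
move=> c0 b0; exists (b / (c + 2)); first by rewrite divr_gt0 // ltr_wpDl.
by rewrite mulrA ltr_pdivrMr ?ltr_wpDl //; nra.
Qed.

Theorem theorem5p3 (R : realType) (n : nat) (P : 'M[sign]_n) (A : 'M[R]_n) :
  in_qual_class P A -> nSSP A ->
  forall P' : 'M[sign]_n, superpattern P P' ->
  exists A' : 'M[R]_n, in_qual_class P' A' /\ similar_real A A' /\ nSSP A'.
Proof.
move=> qualA sspA P' superP.
have [d d0 openA] := nSSP_open sspA.
have [c c0 simA] := nSSP_similar_perturbation sspA.
have [a a0 Aa] := nonzero_entries_ge A.
have m0 : 0 < Num.min (Num.min 1 a) d by rewrite !lt_min ltr01 a0 d0.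
have [e e0] := exists_small_pos _ _ (ltW c0) m0.
rewrite !lt_min => /andP[/andP[e1 ea] ed].
have [F [Fsupp Fe simB]] := simA (sign_fill A P') e (sign_fill_norm A P') e0 (ltac:(lra)).
have FA i j : A i j != 0 -> `|F i j| < `|A i j|.
  move=> Aij; rewrite (le_lt_trans (mx_entry_norm_le F i j)) //.
  by rewrite (lt_le_trans _ (Aa i j Aij)) //; lra.
have qualB := qual_class_perturbation qualA superP e0 Fsupp FA.
exists (A + e *: sign_fill A P' + F); split=> //; split=> //.
apply: openA => [|i j]; last exact: superpattern_support qualA qualB superP.
have -> : A + e *: sign_fill A P' + F - A = e *: sign_fill A P' + F.
  by apply/matrixP => i j; rewrite !mxE; ring.
rewrite (le_lt_trans (ler_normD _ _)) // normrZ gtr0_norm //.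
have := ler_wpM2l (ltW e0) (sign_fill_norm A P'); lra.
Qed.
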